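(* Let $\pi$ be a set of primes, $G$ a finite group, $H$ a $\pi$-Hall subgroup of $G$, and $A=A_1\times\dots\times A_s$ a normal subgroup of $G$ which is the (internal) direct product of subgroups $A_1,\dots,A_s$, such that $G$ acts transitively by conjugation on the set $\{A_1,\dots,A_s\}$. Assume $G=HAC_G(A)$. Then $k_\pi^G(A)=k_\pi^G(A_1)=\dots=k_\pi^G(A_s)$.
   Context: All groups are finite. A subgroup $H$ of $G$ is a $\pi$-Hall subgroup if all prime divisors of $|H|$ lie in $\pi$ and no prime divisor of $|G:H|$ lies in $\pi$. For a subnormal subgroup $A$ of a group $G$ possessing $\pi$-Hall subgroups, a $G$-induced $\pi$-Hall subgroup of $A$ is a subgroup $K\cap A$ with $K$ a $\pi$-Hall subgroup of $G$; an $A$-class of $G$-induced $\pi$-Hall subgroups is a set $\{(K\cap A)^x\mid x\in A\}$ with $K$ a $\pi$-Hall subgroup of $G$; and $k_\pi^G(A)$ denotes the number of distinct $A$-classes of $G$-induced $\pi$-Hall subgroups of $A$. (Each $A_i$ is subnormal in $G$, being normal in $A$.) *)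

From HB Require Import structures.
From mathcomp Require Import all_boot all_order all_fingroup all_solvable.
Set Implicit Arguments. Unset Strict Implicit. Unset Printing Implicit Defensive.
Import GroupScope.

Definition induced_Hall_classes (gT : finGroupType) (pi : nat_pred)
    (G A : {set gT}) : {set {set {set gT}}} :=
  [set ((K : {set gT}) :&: A) :^: A | K : {group gT} in [set K : {group gT} | pi.-Hall(G) K]].

Definition k_pi (gT : finGroupType) (pi : nat_pred) (G A : {set gT}) : nat :=
  #|induced_Hall_classes pi G A|.

From mathcomp Require Import all_boot all_order all_fingroup all_solvable.
Set Implicit Arguments. Unset Strict Implicit. Unset Printing Implicit Defensive.
Import GroupScope.

(* Let K, L be pi-Hall subgroups of G.  Since A_i <| A <| G, the intersections
   K :&: A and K :&: A_i are pi-Hall subgroups of A and A_i, and moreover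
   K :&: A = \prod_j (K :&: A_j) (compare orders in the direct product).
   The theorem follows by counting (card_imset_eqrel) once we know that
     (K :&: A) ~_A (L :&: A)   <->   (K :&: A_i) ~_(A_i) (L :&: A_i),
   where ~_X is conjugacy under X.
   - (->) intersect with A_i; conjugation by x in A acts on A_i as
     conjugation by an element of A_i, because A = A_i \x R with R
     centralizing A_i.
   - (<-) G/(A C_G(A)) is a pi-group, so every pi-Hall subgroup M of G
     satisfies G = M A C(A); hence if A_j^g = A_k with g in G, then
     (M :&: A_j)^g is an A_k-conjugate of M :&: A_k.  Using transitivity,
     the A_i-conjugacy of K :&: A_i and L :&: A_i transfers to every factor:
     L :&: A_j = (K :&: A_j)^(x_j) with x_j in A_j.  Since the factors
     commute, x = \prod_j x_j conjugates K :&: A onto L :&: A. *)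

Lemma card_imset_eqrel (T U V : finType) (S : {set T}) (f : T -> U) (g : T -> V) :
  {in S &, forall x y, (f x == f y) = (g x == g y)} -> #|f @: S| = #|g @: S|.
Proof.
move=> eq_fg; pose fg x := (f x, g x).
have inj_fst : {in fg @: S &, injective fst}.
  move=> _ _ /imsetP[x Sx ->] /imsetP[y Sy ->] /= efxy.
  by have /eqP := efxy; rewrite eq_fg // => /eqP egxy; rewrite /fg efxy egxy.
have inj_snd : {in fg @: S &, injective snd}.
  move=> _ _ /imsetP[x Sx ->] /imsetP[y Sy ->] /= egxy.
  by have /eqP := egxy; rewrite -eq_fg // => /eqP efxy; rewrite /fg efxy egxy.
have -> : f @: S = fst @: (fg @: S) by rewrite -imset_comp.
have -> : g @: S = snd @: (fg @: S) by rewrite -imset_comp.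
by rewrite (card_in_imset inj_fst) (card_in_imset inj_snd).
Qed.

Section GroupFacts.
Variable gT : finGroupType.
Implicit Types (A B C G K M N : {group gT}) (S : {set gT}).

Lemma conj_classP B (X Y : {set gT}) :
  reflect (exists2 x, x \in B & Y = X :^ x) (X :^: B == Y :^: B).
Proof.
rewrite -!orbitJs; apply: (iffP eqP) => [E | [x Bx ->]].
  have : Y \in orbit 'Js B X by rewrite E orbit_refl.
  by case/imsetP => x Bx ->; exists x.
by apply/esym/orbit_eqP; apply/imsetP; exists x.
Qed.

Lemma conj_mulcent B S x : S \subset B -> x \in B * 'C(B) ->
  exists2 a, a \in B & S :^ x = S :^ a.
Proof.
move=> sSB /mulsgP[a c Ba cBc ->]; exists a => //.
have sSaB : S :^ a \subset B by rewrite -(conjGid Ba) conjSg.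
by rewrite conjsgM (normP (subsetP (cents_norm (centS sSaB)) c cBc)).
Qed.

Lemma dprod_mulcent B C A : B \x C = A -> A * 'C(A) \subset B * 'C(B).
Proof.
case/dprodP=> _ defA cBC _; rewrite -defA -mulgA mulgS // mul_subG //.
by rewrite centS ?mulG_subl.
Qed.

Lemma Hall_meet_normal pi A B K : B <| A -> pi.-Hall(A) (K :&: A) ->
  pi.-Hall(B) (K :&: B).
Proof.
move=> nBA /(Hall_setI_normal nBA).
by rewrite -setIA (setIidPr (normal_sub nBA)).
Qed.

(* A pi-Hall subgroup of B \x C cut out by K is the product of the
   pi-Hall subgroups of B and C cut out by K (both have order |A|_pi). *)
Lemma dprod_Hall_meet pi B C A K : B \x C = A -> pi.-Hall(A) (K :&: A) ->
  K :&: A = (K :&: B) * (K :&: C).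
Proof.
move=> defA hallKA; have [nBA nCA] := dprod_normal2 defA.
have [_ defBC _ tiBC] := dprodP defA.
have hallKB := Hall_meet_normal nBA hallKA.
have hallKC := Hall_meet_normal nCA hallKA.
have tiK : (K :&: B) :&: (K :&: C) = 1.
  by apply/trivgP; rewrite -tiBC setISS ?subsetIr.
apply/eqP; rewrite eq_sym eqEcard TI_cardMg //.
rewrite !(card_Hall hallKA, card_Hall hallKB, card_Hall hallKC).
rewrite -(dprod_card defA) partnM // leqnn andbT subsetI mul_subG ?subsetIl //=.
by rewrite -defBC mulgSS ?subsetIr.
Qed.

Lemma bigdprod_Hall_meet pi (I : Type) (r : seq I) (P : pred I)
    (F : I -> {group gT}) A K :
    \big[dprod/1]_(i <- r | P i) F i = A -> pi.-Hall(A) (K :&: A) ->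
  K :&: A = \prod_(i <- r | P i) (K :&: F i).
Proof.
elim: r A => [|i r IHr] A; rewrite ?big_nil ?big_cons.
  by move=> <- _; rewrite setIg1.
case: ifP => [Pi | _]; last exact: IHr.
move=> defA hallKA; have [[_ R _ defR] _ _ _] := dprodP defA.
rewrite defR in defA; have [_ nRA] := dprod_normal2 defA.
rewrite (dprod_Hall_meet defA hallKA).
by rewrite (IHr R defR (Hall_meet_normal nRA hallKA)).
Qed.

Lemma Hall_mul_normal_pquo pi G N M : N <| G -> pi.-group (G / N) ->
  pi.-Hall(G) M -> M * N = G.
Proof.
move=> /andP[sNG nNG] piGN hallM; have sMG := pHall_sub hallM.
have nNM : M \subset 'N(N) := subset_trans sMG nNG.
have eqMG : M / N = G / N.
  apply/eqP; rewrite eqEcard quotientS //= (card_Hall (quotient_pHall nNM hallM)).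
  by rewrite part_pnat_id.
apply/eqP; rewrite eqEsubset mul_subG //= -norm_joinEl //.
by rewrite -(quotientSGK nNG (joing_subr M N)) -eqMG quotientS ?joing_subl.
Qed.

Lemma conjs_prod_centralized (I : eqType) (r : seq I) (x_ : I -> gT) C S j :
    uniq r -> j \in r -> (forall i, i != j -> x_ i \in 'C(C)) ->
  S \subset C -> x_ j \in C -> S :^ (\prod_(i <- r) x_ i) = S :^ x_ j.
Proof.
move=> + rj cCx sSC Cxj; case/splitPr: rj => r1 r2.
rewrite cat_uniq /= negb_or => /and3P[_ /andP[r1j _] /andP[r2j _]].
have cC_prod r' : j \notin r' -> \prod_(i <- r') x_ i \in 'C(C).
  move=> r'j; rewrite big_seq; apply: group_prod => i r'i; apply: cCx.
  by apply: contraNneq r'j => <-.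
have sSxC : S :^ x_ j \subset C by rewrite -(conjGid Cxj) conjSg.
rewrite big_cat big_cons /= !conjsgM.
rewrite (normP (subsetP (cents_norm (centS sSC)) _ (cC_prod _ r1j))).
by rewrite (normP (subsetP (cents_norm (centS sSxC)) _ (cC_prod _ r2j))).
Qed.

End GroupFacts.

Section InducedHallClasses.
Variables (gT : finGroupType) (pi : nat_pred) (G H A : {group gT}).
Variables (s : nat) (A_ : 'I_s -> {group gT}).
Hypotheses (hallH : pi.-Hall(G) H) (nAG : A <| G).
Hypothesis defA : \big[dprod/1]_(i < s) A_ i = A.
Hypothesis defG : (G : {set gT}) = H * A * 'C_G(A).

Lemma factor_complement j :
  exists2 R : {group gT}, A_ j \x R = A & forall k, k != j -> A_ k \subset R.
Proof.
have defAj := defA; rewrite (bigD1 j) //= in defAj.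
have [[_ R _ defR] _ _ _] := dprodP defAj; rewrite defR in defAj.
exists R => // k kj; move: defR; rewrite (bigD1 k) //=.
by case/dprodP=> [[Ak Rk -> ->] <- _ _]; apply: mulG_subl.
Qed.

Lemma factor_normal j : A_ j <| A.
Proof. by have [R /dprod_normal2[]] := factor_complement j. Qed.

Lemma factors_cent k j : k != j -> A_ k \subset 'C(A_ j).
Proof.
move=> kj; have [R /dprodP[_ _ cAjR _] sAkR] := factor_complement j.
exact: subset_trans (sAkR k kj) cAjR.
Qed.

Lemma mulcent_factor j : A * 'C(A) \subset A_ j * 'C(A_ j).
Proof. by have [R /dprod_mulcent] := factor_complement j. Qed.

(* Every pi-Hall subgroup M of G covers G modulo A C(A): as G = H A C_G(A),
   the quotient of G by A C_G(A) is a pi-group. *)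
Lemma Hall_cover (M : {group gT}) : pi.-Hall(G) M -> G \subset M * (A * 'C(A)).
Proof.
move=> hallM; pose N := (A <*> 'C_G(A))%G.
have defN : N :=: A * 'C_G(A) by rewrite /= cent_joinEr ?subsetIr.
have nNG : N <| G.
  apply/andP; split; first by rewrite join_subG normal_sub ?subsetIl.
  by rewrite defN normsM ?normsI ?normG ?norms_cent ?normal_norm.
have piGN : pi.-group (G / N).
  rewrite [in G / N]defG -mulgA -defN quotientMidr.
  exact: quotient_pgroup (pHall_pgroup hallH).
by rewrite -{1}(Hall_mul_normal_pquo nNG piGN hallM) defN !mulgS ?subsetIr.
Qed.

Lemma Hall_meet_factor_conj (M : {group gT}) j k g :
    pi.-Hall(G) M -> g \in G -> A_ j :^ g = A_ k ->
  exists2 a, a \in A_ k & (M :&: A_ j) :^ g = (M :&: A_ k) :^ a.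
Proof.
move=> hallM Gg defAk.
have /mulsgP[m n Mm ACn defg] := subsetP (Hall_cover hallM) g Gg.
have AkCn := subsetP (mulcent_factor k) n ACn.
have nAkn : n \in 'N(A_ k) := subsetP (mul_subG (normG _) (cent_sub _)) n AkCn.
have defAkm : A_ j :^ m = A_ k.
  by apply: (@conjsg_inj _ n); rewrite -conjsgM -defg defAk (normP nAkn).
have [a Aka defMAk] := conj_mulcent (subsetIr M (A_ k)) AkCn.
by exists a; rewrite // defg conjsgM conjIg defAkm (conjGid Mm).
Qed.

Lemma classes_restrict_factor (K L : {group gT}) i :
    (K :&: A) :^: A == (L :&: A) :^: A ->
  (K :&: A_ i) :^: A_ i == (L :&: A_ i) :^: A_ i.
Proof.
case/conj_classP=> x Ax defLA; apply/conj_classP.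
have sAiA := normal_sub (factor_normal i).
have nAix : x \in 'N(A_ i) := subsetP (normal_norm (factor_normal i)) x Ax.
have meetAi (X : {set gT}) : X :&: A :&: A_ i = X :&: A_ i.
  by rewrite -setIA (setIidPr sAiA).
have -> : L :&: A_ i = (K :&: A_ i) :^ x.
  by rewrite -meetAi defLA -{1}(normP nAix) -conjIg meetAi.
have ACx : x \in A * 'C(A) := subsetP (mulG_subl _ _) x Ax.
have [a Aia ->] := conj_mulcent (subsetIr K (A_ i)) (subsetP (mulcent_factor i) x ACx).
by exists a.
Qed.

Hypothesis transA : forall i j, exists2 g, g \in G & A_ i :^ g = A_ j.

Lemma Hall_meet_factors_conj (K L : {group gT}) i j y :
    pi.-Hall(G) K -> pi.-Hall(G) L ->
    y \in A_ i -> L :&: A_ i = (K :&: A_ i) :^ y ->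
  exists2 x, x \in A_ j & L :&: A_ j = (K :&: A_ j) :^ x.
Proof.
move=> hallK hallL Aiy defLAi; have [g Gg defAj] := transA i j.
have [a1 Aja1 defLAjg] := Hall_meet_factor_conj hallL Gg defAj.
have sAiG : A_ i \subset G := subset_trans (normal_sub (factor_normal i)) (normal_sub nAG).
have Gy : y \in G := subsetP sAiG y Aiy.
have defAjyg : A_ i :^ (y * g) = A_ j by rewrite conjsgM conjGid.
have [a2 Aja2 defKAjyg] := Hall_meet_factor_conj hallK (groupM Gy Gg) defAjyg.
exists (a2 * a1^-1); first by rewrite groupM ?groupV.
apply: (@conjsg_inj _ a1).
by rewrite -defLAjg defLAi -conjsgM defKAjyg -conjsgM mulgKV.
Qed.

Lemma Hall_meet_factors_glue (K L : {group gT}) :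
    pi.-Hall(G) K -> pi.-Hall(G) L ->
    (forall j, exists2 x, x \in A_ j & L :&: A_ j = (K :&: A_ j) :^ x) ->
  exists2 x, x \in A & L :&: A = (K :&: A) :^ x.
Proof.
move=> hallK hallL conj_factors.
have /fin_all_exists[x_ conj_x] :
    forall j, exists x, x \in A_ j /\ L :&: A_ j = (K :&: A_ j) :^ x.
  by move=> j; have [x Ajx defLAj] := conj_factors j; exists x.
exists (\prod_(j < s) x_ j).
  apply: group_prod => j _; have [Ajx _] := conj_x j.
  exact: subsetP (normal_sub (factor_normal j)) _ Ajx.
rewrite (bigdprod_Hall_meet defA (Hall_setI_normal nAG hallL)).
rewrite (bigdprod_Hall_meet defA (Hall_setI_normal nAG hallK)).
rewrite (big_morph (fun S => S :^ \prod_(j < s) x_ j) (fun S T => conjsMg S T _)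
                   (conjs1g _)).
apply: eq_bigr => j _; have [Ajx ->] := conj_x j; apply/esym.
apply: (conjs_prod_centralized (C := A_ j));
  rewrite ?index_enum_uniq ?mem_index_enum ?subsetIr //.
by move=> k kj; have [Akx _] := conj_x k; apply: subsetP (factors_cent kj) _ Akx.
Qed.

Lemma induced_classes_factor_eq (K L : {group gT}) i :
    pi.-Hall(G) K -> pi.-Hall(G) L ->
  ((K :&: A) :^: A == (L :&: A) :^: A) =
  ((K :&: A_ i) :^: A_ i == (L :&: A_ i) :^: A_ i).
Proof.
move=> hallK hallL; apply/idP/idP; first exact: classes_restrict_factor.
case/conj_classP=> y Aiy defLAi; apply/conj_classP.
apply: Hall_meet_factors_glue => // j.
exact: Hall_meet_factors_conj Aiy defLAi.
Qed.

End InducedHallClasses.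

Theorem lemma10 (gT : finGroupType) (pi : nat_pred) (G H A : {group gT})
    (s : nat) (A_ : 'I_s -> {group gT}) :
  pi.-Hall(G) H ->
  A <| G ->
  \big[dprod/1]_(i < s) A_ i = A ->
  (* G acts by conjugation on the set {A_1, ..., A_s} ... *)
  (forall i, forall g, g \in G -> exists j, A_ i :^ g = A_ j) ->
  (* ... and transitively *)
  (forall i j, exists2 g, g \in G & A_ i :^ g = A_ j) ->
  (G : {set gT}) = H * A * 'C_G(A) ->
  forall i, k_pi pi G A = k_pi pi G (A_ i).
Proof.
move=> hallH nAG defA _ transA defG i.
apply: card_imset_eqrel => K L; rewrite !inE => hallK hallL.
exact: (induced_classes_factor_eq hallH nAG defA defG transA).
Qed.
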